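(* Let $F(d)=1/d^2$. Let $(x_n)_{n\in\mathbb Z}$ and $(y_n)_{n\in\mathbb Z}$ be two uniformly discrete configurations such that $\{x_n: x_n\ge0\}=\{y_n: y_n\ge 0\}=:W$ and such that, in each of the two configurations, every particle located at a point of $W$ is in equilibrium. Then $\{x_n:x_n<0\}=\{y_n:y_n<0\}$.
   Context: A configuration is a strictly increasing bi-infinite sequence $(x_n)_{n\in\mathbb Z}$ of reals; it is uniformly discrete if there are constants $0<c\le C<\infty$ with $c\le x_n-x_{n-1}\le C$ for all $n\in\mathbb Z$. With force law $F$ (here $F(d)=1/d^2$), the particle at $x_n$ is in equilibrium if $\sum_{m<n}F(x_n-x_m)$ and $\sum_{m>n}F(x_m-x_n)$ are both finite and equal. *)

From Stdlib Require Import Reals Lra Lia ZArith.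
Open Scope R_scope.

Definition F (d : R) : R := / (d ^ 2).

Definition strictly_increasing (x : Z -> R) : Prop :=
  forall n m : Z, (n < m)%Z -> x n < x m.

Definition uniformly_discrete (x : Z -> R) : Prop :=
  strictly_increasing x /\
  exists c C : R, 0 < c /\ c <= C /\
    forall n : Z, c <= x n - x (n - 1)%Z /\ x n - x (n - 1)%Z <= C.

(* Left sum  sum_{m<n} F(x_n - x_m): the m = n-1-k term, k : nat.
   Right sum sum_{m>n} F(x_m - x_n): the m = n+1+k term.
   Terms are positive, so convergence/value is order independent. *)
Definition left_term (x : Z -> R) (n : Z) (k : nat) : R :=
  F (x n - x (n - Z.of_nat (S k))%Z).
Definition right_term (x : Z -> R) (n : Z) (k : nat) : R :=
  F (x (n + Z.of_nat (S k))%Z - x n).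

Definition in_equilibrium (x : Z -> R) (n : Z) : Prop :=
  exists L : R, infinite_sum (left_term x n) L /\ infinite_sum (right_term x n) L.

(* Let w_0 < w_1 < ... enumerate W, and a_0 > a_1 > ..., b_0 > b_1 > ... the negative
   particles of the two configurations.  Equilibrium at w_j in both configurations, whose
   right sums coincide, gives  sum_m (F (w_j - a_m) - F (w_j - b_m)) = 0  for all j.
   The n-th divided difference of p |-> F (w - p) on the nodes w_0, ..., w_n is, up to
   sign, Q_n(p) = prod_i 1/(w_i - p) * sum_i 1/(w_i - p), so also
   sum_m (Q_n(a_m) - Q_n(b_m)) = 0.  If a and b agree below index k and b_k < a_k, then
   Q_n(b_{k+m}) <= Q_n(a_k) / ((a_k - b_{k+m})^2 * r * T_n), where r = 1/(w_0 - a_k) and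
   T_n = sum_{1 <= i <= n} 1/(w_i - a_k) diverges like the harmonic series because the
   gaps of W are bounded, while sum_m 1/(a_k - b_{k+m})^2 converges because the negative
   particles are separated.  For n large the term Q_n(a_k) alone then exceeds all the
   Q_n(b_{k+m}) together, a contradiction; hence a = b by induction. *)

From Stdlib Require Import Reals ZArith Lra Lia.
From Coquelicot Require Import Coquelicot.
Open Scope R_scope.

Fixpoint sum_below (f : nat -> R) (n : nat) : R :=
  match n with O => 0 | S n' => sum_below f n' + f n' end.

Fixpoint prod_below (f : nat -> R) (n : nat) : R :=
  match n with O => 1 | S n' => prod_below f n' * f n' end.

Lemma sum_below_ext f g n :
  (forall i, (i < n)%nat -> f i = g i) -> sum_below f n = sum_below g n.
Proof.
  induction n as [|n IH]; intros H; simpl; [reflexivity|].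
  rewrite (H n), IH; [reflexivity | intros; apply H; lia | lia].
Qed.

Lemma prod_below_ext f g n :
  (forall i, (i < n)%nat -> f i = g i) -> prod_below f n = prod_below g n.
Proof.
  induction n as [|n IH]; intros H; simpl; [reflexivity|].
  rewrite (H n), IH; [reflexivity | intros; apply H; lia | lia].
Qed.

Lemma sum_below_S_front f n :
  sum_below f (S n) = f 0%nat + sum_below (fun i => f (S i)) n.
Proof. induction n as [|n IH]; simpl in *; [ring | rewrite IH; ring]. Qed.

Lemma prod_below_S_front f n :
  prod_below f (S n) = f 0%nat * prod_below (fun i => f (S i)) n.
Proof. induction n as [|n IH]; simpl in *; [ring | rewrite IH; ring]. Qed.

Lemma sum_below_le f g n :
  (forall i, (i < n)%nat -> f i <= g i) -> sum_below f n <= sum_below g n.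
Proof.
  induction n as [|n IH]; intros H; simpl; [lra|].
  assert (sum_below f n <= sum_below g n) by (apply IH; intros; apply H; lia).
  pose proof (H n ltac:(lia)). lra.
Qed.

Lemma sum_below_nonneg f n : (forall i, 0 <= f i) -> 0 <= sum_below f n.
Proof. intros H; induction n as [|n IH]; simpl; [lra|]. pose proof (H n); lra. Qed.

Lemma sum_below_minus f g n :
  sum_below (fun i => f i - g i) n = sum_below f n - sum_below g n.
Proof. induction n as [|n IH]; simpl; [ring | rewrite IH; ring]. Qed.

Lemma sum_below_scal k f n : sum_below (fun i => k * f i) n = k * sum_below f n.
Proof. induction n as [|n IH]; simpl; [ring | rewrite IH; ring]. Qed.

Lemma sum_f_R0_sum_below f n : sum_f_R0 f n = sum_below f (S n).
Proof. induction n as [|n IH]; simpl in *; [ring | rewrite IH; ring]. Qed.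

Lemma prod_below_mult f g n :
  prod_below (fun i => f i * g i) n = prod_below f n * prod_below g n.
Proof. induction n as [|n IH]; simpl; [ring | rewrite IH; ring]. Qed.

Lemma prod_below_pos f n : (forall i, 0 < f i) -> 0 < prod_below f n.
Proof. intros H; induction n as [|n IH]; simpl; [lra|]. pose proof (H n); nra. Qed.

Lemma prod_below_one_add t n :
  (forall i, 0 <= t i) -> 1 + sum_below t n <= prod_below (fun i => 1 + t i) n.
Proof.
  intros Ht; induction n as [|n IH]; simpl; [lra|].
  pose proof (sum_below_nonneg t n Ht). pose proof (Ht n). nra.
Qed.

Definition harmonic (n : nat) : R := sum_below (fun i => / (INR i + 1)) n.

Lemma harmonic_double n : (1 <= n)%nat -> harmonic n + / 2 <= harmonic (2 * n).
Proof.
  induction n as [|n IH]; intros Hn; [lia|].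
  destruct n as [|n]; [unfold harmonic; simpl; lra|].
  specialize (IH ltac:(lia)).
  replace (2 * S (S n))%nat with (S (S (2 * S n))) by lia.
  unfold harmonic in *. cbn [sum_below] in IH |- *.
  assert (/ (INR (S n) + 1) <= / (INR (2 * S n) + 1) + / (INR (S (2 * S n)) + 1)).
  { rewrite (S_INR (2 * S n)), mult_INR. replace (INR 2) with 2 by (simpl; ring).
    pose proof (pos_INR (S n)). set (m := INR (S n)) in *.
    replace (/ (m + 1)) with (/ (2 * m + 1 + 1) + / (2 * m + 1 + 1)) by (field; lra).
    assert (/ (2 * m + 1 + 1) <= / (2 * m + 1)) by (apply Rinv_le_contravar; lra).
    lra. }
  lra.
Qed.

Lemma harmonic_unbounded T : exists n, T <= harmonic n.
Proof.
  assert (Hpow : forall k, INR k / 2 <= harmonic (2 ^ k)).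
  { induction k as [|k IH]; [unfold harmonic; simpl; lra|].
    replace (2 ^ S k)%nat with (2 * 2 ^ k)%nat by (simpl; lia).
    pose proof (harmonic_double (2 ^ k) (Nat.pow_le_mono_r 2 0 k ltac:(lia) ltac:(lia))).
    rewrite S_INR. lra. }
  destruct (INR_unbounded (2 * T)) as [k Hk].
  exists (2 ^ k)%nat. pose proof (Hpow k). lra.
Qed.

(* Telescoping: [/ (A + c) ^ 2 + / (c * (A + c)) <= / (c * A)]. *)
Lemma inv_sq_sum_bound c M A : 0 < c -> 0 < A ->
  sum_below (fun m => / (A + INR m * c) ^ 2) M <= / A ^ 2 + / (c * A).
Proof.
  intros Hc; revert A; induction M as [|M IH]; intros A HA.
  - assert (0 < / A ^ 2) by (apply Rinv_0_lt_compat, pow_lt; lra).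
    assert (0 < / (c * A)) by (apply Rinv_0_lt_compat, Rmult_lt_0_compat; lra).
    cbn [sum_below]; lra.
  - rewrite sum_below_S_front.
    rewrite (sum_below_ext _ (fun m => / ((A + c) + INR m * c) ^ 2))
      by (intros m _; rewrite S_INR; f_equal; ring).
    pose proof (IH (A + c) ltac:(lra)).
    assert (/ (A + c) ^ 2 + / (c * (A + c)) <= / (c * A)).
    { assert (0 < c / (A * (A + c) ^ 2))
        by (apply Rdiv_lt_0_compat; [lra | apply Rmult_lt_0_compat; [lra | apply pow_lt; lra]]).
      replace (/ (c * A)) with (/ (A + c) ^ 2 + / (c * (A + c)) + c / (A * (A + c) ^ 2))
        by (field; lra).
      lra. }
    simpl (INR 0). replace (A + 0 * c) with A by ring. lra.
Qed.

Lemma steps_le_bound (u : nat -> R) C :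
  (forall i, u (S i) - u i <= C) -> forall i, u i <= u 0%nat + INR i * C.
Proof.
  intros H i; induction i as [|i IH]; [simpl; lra|].
  rewrite S_INR. pose proof (H i). lra.
Qed.

Lemma steps_ge_bound (u : nat -> R) c :
  (forall i, u (S i) <= u i - c) -> forall i, u i <= u 0%nat - INR i * c.
Proof.
  intros H i; induction i as [|i IH]; [simpl; lra|].
  rewrite S_INR. pose proof (H i). lra.
Qed.

Lemma is_series_drop_zeros (a : nat -> R) l k :
  (forall i, (i < k)%nat -> a i = 0) -> is_series a l -> is_series (fun m => a (k + m)%nat) l.
Proof.
  revert a; induction k as [|k IH]; intros a Ha Hs; [exact Hs|].
  apply (IH (fun m => a (S m))); [intros i Hi; apply Ha; lia|].
  apply is_series_incr_1. rewrite (Ha 0%nat) by lia.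
  change (plus l 0) with (l + 0). rewrite Rplus_0_r. exact Hs.
Qed.

Lemma is_series_diff_zero_sym (u v : nat -> R) :
  is_series (fun m => u m - v m) 0 -> is_series (fun m => v m - u m) 0.
Proof.
  intros H. apply (is_series_scal_r (-1)) in H. rewrite Rmult_0_l in H.
  eapply is_series_ext; [|exact H]. intros m. simpl. ring.
Qed.

Lemma series_diff_zero_absurd (u v : nat -> R) :
  is_series (fun m => u m - v m) 0 -> (forall m, 0 <= u m) -> 0 < u 0%nat ->
  (forall M, sum_below v M <= u 0%nat / 2) -> False.
Proof.
  intros Hs Hu Hu0 Hv.
  apply is_series_Reals in Hs.
  destruct (Hs (u 0%nat / 2) ltac:(lra)) as [M HM].
  specialize (HM M (le_n _)). unfold R_dist in HM.
  rewrite sum_f_R0_sum_below, sum_below_minus, sum_below_S_front, Rminus_0_r in HM.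
  pose proof (sum_below_nonneg (fun m => u (S m)) M (fun m => Hu (S m))).
  pose proof (Hv (S M)).
  apply Rabs_def2 in HM. lra.
Qed.

Section Nodes.

Variable w : nat -> R.
Hypothesis w_incr : forall i j, (i < j)%nat -> w i < w j.

Lemma nodes_ge_first i : w 0%nat <= w i.
Proof. destruct i; [lra | left; apply w_incr; lia]. Qed.

Definition inv_gap (p : R) (i : nat) : R := / (w i - p).

Lemma inv_gap_pos p i : p < w 0%nat -> 0 < inv_gap p i.
Proof.
  intros Hp. unfold inv_gap. pose proof (nodes_ge_first i).
  apply Rinv_0_lt_compat. lra.
Qed.

Definition pole_weight (n : nat) (p : R) : R :=
  prod_below (inv_gap p) n * sum_below (inv_gap p) n.

Lemma pole_weight_nonneg n p : p < w 0%nat -> 0 <= pole_weight n p.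
Proof.
  intros Hp. unfold pole_weight.
  pose proof (prod_below_pos (inv_gap p) n (fun i => inv_gap_pos p i Hp)).
  pose proof (sum_below_nonneg (inv_gap p) n (fun i => Rlt_le _ _ (inv_gap_pos p i Hp))).
  nra.
Qed.

Lemma pole_weight_pos n p : p < w 0%nat -> 0 < pole_weight (S n) p.
Proof.
  intros Hp. unfold pole_weight.
  apply Rmult_lt_0_compat; [apply prod_below_pos; intros i; apply inv_gap_pos, Hp|].
  cbn [sum_below].
  pose proof (sum_below_nonneg (inv_gap p) n (fun i => Rlt_le _ _ (inv_gap_pos p i Hp))).
  pose proof (inv_gap_pos p n Hp). lra.
Qed.

(* [divdiff k V j] is the divided difference of [V] at the nodes [w 0, ..., w (k-1), w j]. *)
Fixpoint divdiff (k : nat) (V : nat -> R) (j : nat) : R :=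
  match k with
  | O => V j
  | S k' => (divdiff k' V j - divdiff k' V k') / (w j - w k')
  end.

Lemma divdiff_minus V U k j :
  divdiff k (fun i => V i - U i) j = divdiff k V j - divdiff k U j.
Proof.
  revert j; induction k as [|k IH]; intros j; simpl; [reflexivity|].
  rewrite !IH. unfold Rdiv. ring.
Qed.

Lemma divdiff_zero k j : divdiff k (fun _ => 0) j = 0.
Proof.
  revert j; induction k as [|k IH]; intros j; simpl; [reflexivity|].
  rewrite !IH. unfold Rdiv. ring.
Qed.

Lemma is_series_divdiff (V : nat -> nat -> R) (v : nat -> R) :
  (forall j, is_series (fun m => V m j) (v j)) ->
  forall k j, is_series (fun m => divdiff k (V m) j) (divdiff k v j).
Proof.
  intros H k; induction k as [|k IH]; intros j; simpl; [apply H|].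
  unfold Rdiv. apply is_series_scal_r.
  exact (is_series_minus _ _ _ _ (IH j) (IH k)).
Qed.

Lemma divdiff_F_pole p : p < w 0%nat -> forall k j, (k <= j)%nat ->
  divdiff k (fun i => F (w i - p)) j =
  (-1) ^ k * (prod_below (inv_gap p) k * inv_gap p j *
              (inv_gap p j + sum_below (inv_gap p) k)).
Proof.
  intros Hp k; induction k as [|k IH]; intros j Hj.
  - pose proof (nodes_ge_first j).
    simpl. unfold F, inv_gap. field. lra.
  - cbn [divdiff]. rewrite (IH j), (IH k) by lia.
    pose proof (nodes_ge_first j). pose proof (nodes_ge_first k).
    pose proof (w_incr k j ltac:(lia)).
    cbn [prod_below sum_below pow]. unfold inv_gap. field. lra.
Qed.

Lemma divdiff_F_diag p n : p < w 0%nat ->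
  divdiff n (fun i => F (w i - p)) n = (-1) ^ n * pole_weight (S n) p.
Proof.
  intros Hp. rewrite divdiff_F_pole by (auto; lia).
  unfold pole_weight. cbn [prod_below sum_below]. ring.
Qed.

(* Taking the [n]-th divided difference in the node variable commutes with the
   summation over the poles. *)
Lemma pole_weight_series a b :
  (forall m, a m < w 0%nat) -> (forall m, b m < w 0%nat) ->
  (forall j, is_series (fun m => F (w j - a m) - F (w j - b m)) 0) ->
  forall n, is_series (fun m => pole_weight (S n) (a m) - pole_weight (S n) (b m)) 0.
Proof.
  intros Ha Hb Hser n.
  pose proof (is_series_divdiff _ (fun _ => 0) Hser n n) as H.
  rewrite divdiff_zero in H.
  apply (is_series_scal_r ((-1) ^ n)) in H. rewrite Rmult_0_l in H.
  eapply is_series_ext; [|exact H]. intros m. simpl.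
  rewrite divdiff_minus, !divdiff_F_diag by auto.
  assert (Hsq : (-1) ^ n * (-1) ^ n = 1).
  { rewrite <- Rpow_mult_distr. replace (-1 * -1) with 1 by ring. apply pow1. }
  transitivity ((-1) ^ n * (-1) ^ n *
                (pole_weight (S n) (a m) - pole_weight (S n) (b m))); [ring|].
  rewrite Hsq. ring.
Qed.

(* Since [inv_gap s i = inv_gap b i * (1 + (s - b) * inv_gap s i)], moving the pole
   from [b] up to [s] multiplies the product by at least [(s - b)^2] times the first
   and the remaining reciprocal gaps at [s]. *)
Lemma pole_weight_ratio s b n : b < s -> s < w 0%nat ->
  pole_weight (S n) b *
    ((s - b) ^ 2 * inv_gap s 0 * sum_below (fun i => inv_gap s (S i)) n)
  <= pole_weight (S n) s.
Proof.
  intros Hbs Hs. set (d := s - b).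
  assert (Hd : 0 < d) by (unfold d; lra).
  assert (Hb : b < w 0%nat) by lra.
  assert (Hprod : prod_below (inv_gap s) (S n) =
           prod_below (inv_gap b) (S n) * prod_below (fun i => 1 + d * inv_gap s i) (S n)).
  { rewrite <- prod_below_mult. apply prod_below_ext. intros i _.
    pose proof (nodes_ge_first i). unfold inv_gap, d. field. split; lra. }
  set (r0 := inv_gap s 0). set (T := sum_below (fun i => inv_gap s (S i)) n).
  assert (Hr0 : 0 < r0) by (apply inv_gap_pos; lra).
  assert (HT : 0 <= T)
    by (apply sum_below_nonneg; intros i; apply Rlt_le, inv_gap_pos; lra).
  assert (Hgrowth : (d * r0) * (d * T) <= prod_below (fun i => 1 + d * inv_gap s i) (S n)).
  { rewrite prod_below_S_front.
    pose proof (prod_below_one_add (fun i => d * inv_gap s (S i)) n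
                  (fun i => Rlt_le _ _ (Rmult_lt_0_compat _ _ Hd (inv_gap_pos s (S i) Hs)))) as H.
    cbv beta in H. rewrite sum_below_scal in H. fold T in H. fold r0.
    assert (0 <= d * r0) by nra. assert (0 <= d * T) by nra.
    nra. }
  assert (Hsum : sum_below (inv_gap b) (S n) <= sum_below (inv_gap s) (S n)).
  { apply sum_below_le. intros i _. pose proof (nodes_ge_first i).
    unfold inv_gap. apply Rinv_le_contravar; lra. }
  pose proof (prod_below_pos (inv_gap b) (S n) (fun i => inv_gap_pos b i Hb)).
  pose proof (sum_below_nonneg (inv_gap b) (S n) (fun i => Rlt_le _ _ (inv_gap_pos b i Hb))).
  unfold pole_weight. rewrite Hprod.
  set (Pb := prod_below (inv_gap b) (S n)) in *.
  set (M := prod_below (fun i => 1 + d * inv_gap s i) (S n)) in *.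
  set (Sb := sum_below (inv_gap b) (S n)) in *.
  set (Ss := sum_below (inv_gap s) (S n)) in *.
  replace (Pb * Sb * (d ^ 2 * r0 * T)) with (Pb * Sb * ((d * r0) * (d * T))) by ring.
  assert (Pb * Sb * ((d * r0) * (d * T)) <= Pb * Sb * M)
    by (apply Rmult_le_compat_l; [nra | exact Hgrowth]).
  assert (HM : 0 <= M).
  { assert (0 <= d * r0 * (d * T)) by (apply Rmult_le_pos; apply Rmult_le_pos; lra). lra. }
  assert (Pb * Sb * M <= Pb * Ss * M)
    by (apply Rmult_le_compat_r; [exact HM | apply Rmult_le_compat_l; lra]).
  replace (Pb * M * Ss) with (Pb * Ss * M) by ring. lra.
Qed.

Variable C : R.
Hypothesis w_gap : forall i, w (S i) - w i <= C.

(* Bounded gaps make the reciprocal gaps dominate a multiple of the harmonic series. *)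
Lemma inv_gap_tail_unbounded s T : s < w 0%nat ->
  exists n, T <= sum_below (fun i => inv_gap s (S i)) n.
Proof.
  intros Hs.
  assert (HC : 0 < C) by (pose proof (w_incr 0 1 ltac:(lia)); pose proof (w_gap 0); lra).
  set (E := w 0%nat - s + C).
  assert (HE : 0 < E) by (unfold E; lra).
  destruct (harmonic_unbounded (E * T)) as [n Hn]. exists n.
  assert (Hcmp : / E * harmonic n <= sum_below (fun i => inv_gap s (S i)) n).
  { unfold harmonic. rewrite <- sum_below_scal. apply sum_below_le. intros i _.
    pose proof (steps_le_bound w C w_gap (S i)) as Hw. rewrite S_INR in Hw.
    pose proof (nodes_ge_first (S i)). pose proof (pos_INR i).
    unfold inv_gap. rewrite <- Rinv_mult. apply Rinv_le_contravar; [lra|].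
    unfold E. nra. }
  apply Rmult_le_compat_l with (r := / E) in Hn; [|apply Rlt_le, Rinv_0_lt_compat, HE].
  replace (/ E * (E * T)) with T in Hn by (field; lra).
  lra.
Qed.

(* The bound of [pole_weight_ratio] decays like [1 / (s - b m) ^ 2], which is summable
   for separated poles, and its constant can be made small through [T]. *)
Lemma pole_weight_tail_small s b c : 0 < c -> s < w 0%nat -> b 0%nat < s ->
  (forall m, b (S m) <= b m - c) ->
  exists n, forall M,
    sum_below (fun m => pole_weight (S n) (b m)) M <= pole_weight (S n) s / 2.
Proof.
  intros Hc Hs Hb0 Hbc.
  set (d0 := s - b 0%nat). assert (Hd0 : 0 < d0) by (unfold d0; lra).
  set (K := / d0 ^ 2 + / (c * d0)).
  assert (HK : 0 < K).
  { assert (0 < / d0 ^ 2) by (apply Rinv_0_lt_compat, pow_lt; lra).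
    assert (0 < / (c * d0)) by (apply Rinv_0_lt_compat, Rmult_lt_0_compat; lra).
    unfold K; lra. }
  set (r0 := inv_gap s 0). assert (Hr0 : 0 < r0) by (apply inv_gap_pos; lra).
  destruct (inv_gap_tail_unbounded s (2 * K / r0) Hs) as [n HT].
  set (T := sum_below (fun i => inv_gap s (S i)) n) in HT.
  assert (HTpos : 0 < T) by (assert (0 < 2 * K / r0) by (apply Rdiv_lt_0_compat; lra); lra).
  set (Qs := pole_weight (S n) s).
  assert (HQs : 0 <= Qs) by (apply pole_weight_nonneg; lra).
  assert (Hbm : forall m,
            pole_weight (S n) (b m) <= Qs / (r0 * T) * / (d0 + INR m * c) ^ 2).
  { intros m.
    pose proof (steps_ge_bound b c Hbc m). pose proof (pos_INR m).
    assert (Hdm : 0 < d0 + INR m * c <= s - b m) by (unfold d0; nra).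
    pose proof (pole_weight_ratio s (b m) n ltac:(lra) Hs) as Hq. fold r0 T Qs in Hq.
    pose proof (pole_weight_nonneg (S n) (b m) ltac:(lra)).
    assert (Hsq : (d0 + INR m * c) ^ 2 <= (s - b m) ^ 2) by (apply pow_incr; lra).
    replace (Qs / (r0 * T) * / (d0 + INR m * c) ^ 2)
      with (Qs / ((d0 + INR m * c) ^ 2 * r0 * T)) by (field; split; lra).
    assert (Hden : 0 < (d0 + INR m * c) ^ 2 * r0 * T)
      by (apply Rmult_lt_0_compat; [apply Rmult_lt_0_compat; [apply pow_lt|] |]; lra).
    apply (Rle_div_r _ _ _ Hden).
    eapply Rle_trans; [|exact Hq].
    apply Rmult_le_compat_l; [lra|].
    apply Rmult_le_compat_r; [lra|]. apply Rmult_le_compat_r; lra. }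
  exists n. intros M. fold Qs.
  apply Rle_trans with (sum_below (fun m => Qs / (r0 * T) * / (d0 + INR m * c) ^ 2) M);
    [apply sum_below_le; intros m _; apply Hbm|].
  rewrite sum_below_scal.
  assert (Hcoef : 0 <= Qs / (r0 * T))
    by (apply Rdiv_le_0_compat; [lra | apply Rmult_lt_0_compat; lra]).
  assert (HKT : K <= r0 * T / 2).
  { apply Rmult_le_compat_l with (r := r0 / 2) in HT; [|lra].
    replace (r0 / 2 * (2 * K / r0)) with K in HT by (field; lra). lra. }
  pose proof (inv_sq_sum_bound c M d0 Hc Hd0) as Hsum. fold K in Hsum.
  apply Rle_trans with (Qs / (r0 * T) * (r0 * T / 2)); [apply Rmult_le_compat_l; lra|].
  right. field. lra.
Qed.

Lemma pole_series_absurd a b c : 0 < c ->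
  (forall m, a m < w 0%nat) -> b 0%nat < a 0%nat -> (forall m, b (S m) <= b m - c) ->
  (forall j, is_series (fun m => F (w j - a m) - F (w j - b m)) 0) -> False.
Proof.
  intros Hc Ha Hba Hbc Hser.
  assert (Hb : forall m, b m < w 0%nat).
  { intros m. pose proof (steps_ge_bound b c Hbc m). pose proof (pos_INR m).
    pose proof (Ha 0%nat). nra. }
  destruct (pole_weight_tail_small (a 0%nat) b c Hc (Ha 0%nat) Hba Hbc) as [n Hn].
  apply (series_diff_zero_absurd (fun m => pole_weight (S n) (a m))
                                 (fun m => pole_weight (S n) (b m))).
  - exact (pole_weight_series a b Ha Hb Hser n).
  - intros m. apply pole_weight_nonneg, Ha.
  - apply pole_weight_pos, Ha.
  - exact Hn.
Qed.

Lemma poles_equal a b ca cb : 0 < ca -> 0 < cb ->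
  (forall m, a m < w 0%nat) -> (forall m, b m < w 0%nat) ->
  (forall m, a (S m) <= a m - ca) -> (forall m, b (S m) <= b m - cb) ->
  (forall j, is_series (fun m => F (w j - a m) - F (w j - b m)) 0) ->
  forall i, a i = b i.
Proof.
  intros Hca Hcb Ha Hb Hac Hbc Hser i.
  induction i as [k IH] using (well_founded_induction lt_wf).
  assert (Hshift : forall j,
            is_series (fun m => F (w j - a (k + m)%nat) - F (w j - b (k + m)%nat)) 0).
  { intros j. apply (is_series_drop_zeros (fun m => F (w j - a m) - F (w j - b m)));
      [intros i Hi; rewrite (IH i Hi); ring | apply Hser]. }
  destruct (total_order_T (a k) (b k)) as [[Hlt | Heq] | Hgt]; [exfalso | exact Heq | exfalso].
  - apply (pole_series_absurd (fun m => b (k + m)%nat) (fun m => a (k + m)%nat) ca Hca).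
    + intros m. apply Hb.
    + cbv beta. rewrite Nat.add_0_r. exact Hlt.
    + intros m. rewrite Nat.add_succ_r. apply Hac.
    + intros j. exact (is_series_diff_zero_sym _ _ (Hshift j)).
  - apply (pole_series_absurd (fun m => a (k + m)%nat) (fun m => b (k + m)%nat) cb Hcb).
    + intros m. apply Ha.
    + cbv beta. rewrite Nat.add_0_r. exact Hgt.
    + intros m. rewrite Nat.add_succ_r. apply Hbc.
    + exact Hshift.
Qed.

End Nodes.

Lemma strictly_increasing_le x : strictly_increasing x ->
  forall n m, (n <= m)%Z -> x n <= x m.
Proof. intros H n m Hnm. destruct (Z.eq_dec n m); [subst; lra | left; apply H; lia]. Qed.

Lemma strictly_increasing_lt_inv x : strictly_increasing x ->
  forall n m, x n < x m -> (n < m)%Z.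
Proof.
  intros H n m Hx. destruct (Z_lt_le_dec n m) as [|Hmn]; [assumption|].
  pose proof (strictly_increasing_le x H m n Hmn). lra.
Qed.

Lemma sign_change_index (x : Z -> R) lo (j : nat) :
  x lo < 0 -> 0 <= x (lo + Z.of_nat j)%Z -> exists n, x (n - 1)%Z < 0 /\ 0 <= x n.
Proof.
  intros Hlo; induction j as [|j IH]; intros Hj.
  - replace (lo + Z.of_nat 0)%Z with lo in Hj by lia. lra.
  - destruct (Rlt_le_dec (x (lo + Z.of_nat j)%Z) 0) as [Hneg | Hpos]; [|exact (IH Hpos)].
    exists (lo + Z.of_nat (S j))%Z.
    replace (lo + Z.of_nat (S j) - 1)%Z with (lo + Z.of_nat j)%Z by lia. auto.
Qed.

Lemma uniformly_discrete_crossing x : uniformly_discrete x ->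
  exists n, x (n - 1)%Z < 0 /\ 0 <= x n.
Proof.
  intros [_ [c [C [Hc [_ Hg]]]]].
  destruct (INR_unbounded (Rabs (x 0%Z) / c)) as [k Hk].
  assert (Hkc : Rabs (x 0%Z) < INR k * c).
  { apply Rmult_lt_compat_r with (r := c) in Hk; [|lra].
    replace (Rabs (x 0%Z) / c * c) with (Rabs (x 0%Z)) in Hk by (field; lra). lra. }
  pose proof (steps_ge_bound (fun i => x (- Z.of_nat i)%Z) c) as Hdown.
  pose proof (steps_ge_bound (fun i => - x (Z.of_nat i)) c) as Hup.
  cbv beta in Hdown, Hup.
  assert (Hlo : x (- Z.of_nat k)%Z < 0).
  { assert (x (- Z.of_nat k)%Z <= x 0%Z - INR k * c).
    { apply Hdown. intros i. pose proof (proj1 (Hg (- Z.of_nat i)%Z)).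
      replace (- Z.of_nat i - 1)%Z with (- Z.of_nat (S i))%Z in * by lia. lra. }
    pose proof (Rle_abs (x 0%Z)). lra. }
  apply (sign_change_index x (- Z.of_nat k)%Z (k + k) Hlo).
  replace (- Z.of_nat k + Z.of_nat (k + k))%Z with (Z.of_nat k) by lia.
  assert (- x (Z.of_nat k) <= - x 0%Z - INR k * c).
  { apply Hup. intros i. pose proof (proj1 (Hg (Z.of_nat (S i)))).
    replace (Z.of_nat (S i) - 1)%Z with (Z.of_nat i) in * by lia. lra. }
  pose proof (Rle_abs (- x 0%Z)). rewrite Rabs_Ropp in *. lra.
Qed.

Lemma next_index_le (y : Z -> R) m t : strictly_increasing y ->
  (exists i, y i = t) -> y (m - 1)%Z < t -> y m <= t.
Proof.
  intros Hy [i <-] Hlt.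
  apply strictly_increasing_le; [exact Hy|].
  pose proof (strictly_increasing_lt_inv y Hy _ _ Hlt). lia.
Qed.

Definition right_part (x : Z -> R) (n0 : Z) (j : nat) : R := x (n0 + Z.of_nat j)%Z.
Definition left_part (x : Z -> R) (n0 : Z) (i : nat) : R := x (n0 - 1 - Z.of_nat i)%Z.

Lemma right_parts_equal x y n0 m0 :
  strictly_increasing x -> strictly_increasing y ->
  (forall t : R, 0 <= t -> ((exists n : Z, x n = t) <-> (exists n : Z, y n = t))) ->
  x (n0 - 1)%Z < 0 -> 0 <= x n0 -> y (m0 - 1)%Z < 0 -> 0 <= y m0 ->
  forall k, right_part x n0 k = right_part y m0 k.
Proof.
  intros Hx Hy HW Hx1 Hx0 Hy1 Hy0 k. unfold right_part.
  assert (Hxk : forall k, 0 <= x (n0 + Z.of_nat k)%Z)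
    by (intros j; pose proof (strictly_increasing_le x Hx n0 (n0 + Z.of_nat j) ltac:(lia)); lra).
  assert (Hyk : forall k, 0 <= y (m0 + Z.of_nat k)%Z)
    by (intros j; pose proof (strictly_increasing_le y Hy m0 (m0 + Z.of_nat j) ltac:(lia)); lra).
  induction k as [|k IH].
  - apply Rle_antisym.
    + apply (next_index_le x); [exact Hx | apply HW; [apply Hyk | eexists; reflexivity] |].
      replace (n0 + Z.of_nat 0)%Z with n0 by lia. pose proof (Hyk 0%nat). lra.
    + apply (next_index_le y); [exact Hy | apply HW; [apply Hxk | eexists; reflexivity] |].
      replace (m0 + Z.of_nat 0)%Z with m0 by lia. pose proof (Hxk 0%nat). lra.
  - replace (n0 + Z.of_nat (S k) - 1)%Z with (n0 + Z.of_nat k)%Z in * by lia.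
    pose proof (Hx (n0 + Z.of_nat k)%Z (n0 + Z.of_nat (S k))%Z ltac:(lia)).
    pose proof (Hy (m0 + Z.of_nat k)%Z (m0 + Z.of_nat (S k))%Z ltac:(lia)).
    apply Rle_antisym.
    + apply (next_index_le x); [exact Hx | apply HW; [apply Hyk | eexists; reflexivity] |].
      replace (n0 + Z.of_nat (S k) - 1)%Z with (n0 + Z.of_nat k)%Z by lia. lra.
    + apply (next_index_le y); [exact Hy | apply HW; [apply Hxk | eexists; reflexivity] |].
      replace (m0 + Z.of_nat (S k) - 1)%Z with (m0 + Z.of_nat k)%Z by lia. lra.
Qed.

Lemma right_part_incr x n0 : strictly_increasing x ->
  forall i j, (i < j)%nat -> right_part x n0 i < right_part x n0 j.
Proof. intros Hx i j Hij. unfold right_part. apply Hx. lia. Qed.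

Lemma right_part_step x n0 C : (forall n, x n - x (n - 1)%Z <= C) ->
  forall i, right_part x n0 (S i) - right_part x n0 i <= C.
Proof.
  intros Hg i. unfold right_part. pose proof (Hg (n0 + Z.of_nat (S i))%Z).
  replace (n0 + Z.of_nat (S i) - 1)%Z with (n0 + Z.of_nat i)%Z in * by lia. lra.
Qed.

Lemma left_part_step x n0 c : (forall n, c <= x n - x (n - 1)%Z) ->
  forall i, left_part x n0 (S i) <= left_part x n0 i - c.
Proof.
  intros Hg i. unfold left_part. pose proof (Hg (n0 - 1 - Z.of_nat i)%Z).
  replace (n0 - 1 - Z.of_nat i - 1)%Z with (n0 - 1 - Z.of_nat (S i))%Z in * by lia. lra.
Qed.

Lemma left_part_lt x n0 : strictly_increasing x ->
  forall i, left_part x n0 i < right_part x n0 0.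
Proof. intros Hx i. unfold left_part, right_part. apply Hx. lia. Qed.

Lemma negative_values_left_part x n0 : strictly_increasing x -> 0 <= x n0 ->
  forall t, t < 0 -> ((exists n, x n = t) <-> (exists i, left_part x n0 i = t)).
Proof.
  intros Hx Hx0 t Ht. unfold left_part. split; intros [n Hn].
  - assert (n < n0)%Z by (apply (strictly_increasing_lt_inv x Hx); lra).
    exists (Z.to_nat (n0 - 1 - n)).
    replace (n0 - 1 - Z.of_nat (Z.to_nat (n0 - 1 - n)))%Z with n by lia. exact Hn.
  - exists (n0 - 1 - Z.of_nat n)%Z. exact Hn.
Qed.

(* Equilibrium at each point of W: the right sums agree because the right parts do,
   hence so do the left sums, whose first [j] terms also agree. *)
Lemma left_sums_cancel x y n0 m0 :
  strictly_increasing x -> strictly_increasing y -> 0 <= x n0 -> 0 <= y m0 ->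
  (forall n, 0 <= x n -> in_equilibrium x n) ->
  (forall n, 0 <= y n -> in_equilibrium y n) ->
  (forall k, right_part x n0 k = right_part y m0 k) ->
  forall j, is_series (fun m => F (right_part x n0 j - left_part x n0 m)
                             - F (right_part x n0 j - left_part y m0 m)) 0.
Proof.
  intros Hx Hy Hx0 Hy0 Eqx Eqy Hright j.
  destruct (Eqx (n0 + Z.of_nat j)%Z) as [Lx [Hlx Hrx]].
  { pose proof (strictly_increasing_le x Hx n0 (n0 + Z.of_nat j) ltac:(lia)). lra. }
  destruct (Eqy (m0 + Z.of_nat j)%Z) as [Ly [Hly Hry]].
  { pose proof (strictly_increasing_le y Hy m0 (m0 + Z.of_nat j) ltac:(lia)). lra. }
  apply is_series_Reals in Hlx, Hrx, Hly, Hry.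
  assert (Hright_term : forall k, right_term x (n0 + Z.of_nat j) k
                                 = right_term y (m0 + Z.of_nat j) k).
  { intros k. pose proof (Hright (j + S k)%nat) as H. pose proof (Hright j) as H'.
    unfold right_term, right_part in *.
    replace (n0 + Z.of_nat j + Z.of_nat (S k))%Z with (n0 + Z.of_nat (j + S k))%Z by lia.
    replace (m0 + Z.of_nat j + Z.of_nat (S k))%Z with (m0 + Z.of_nat (j + S k))%Z by lia.
    rewrite H, H'. reflexivity. }
  assert (HL : Lx = Ly).
  { apply is_series_unique in Hry. rewrite <- Hry.
    symmetry. apply is_series_unique. exact (is_series_ext _ _ _ Hright_term Hrx). }
  subst Ly.
  assert (Hd : is_series (fun k => left_term x (n0 + Z.of_nat j) k
                                  - left_term y (m0 + Z.of_nat j) k) (Lx - Lx))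
    by exact (is_series_minus _ _ _ _ Hlx Hly).
  rewrite Rminus_eq_0 in Hd.
  apply (is_series_drop_zeros _ _ j) in Hd.
  - eapply is_series_ext; [|exact Hd]. intros i. cbv beta.
    pose proof (Hright j) as H. unfold left_term, left_part, right_part in *. rewrite H.
    replace (n0 + Z.of_nat j - Z.of_nat (S (j + i)))%Z with (n0 - 1 - Z.of_nat i)%Z by lia.
    replace (m0 + Z.of_nat j - Z.of_nat (S (j + i)))%Z with (m0 - 1 - Z.of_nat i)%Z by lia.
    reflexivity.
  - intros i Hi. pose proof (Hright (j - S i)%nat) as H. pose proof (Hright j) as H'.
    unfold left_term, right_part in *.
    replace (n0 + Z.of_nat j - Z.of_nat (S i))%Z with (n0 + Z.of_nat (j - S i))%Z by lia.
    replace (m0 + Z.of_nat j - Z.of_nat (S i))%Z with (m0 + Z.of_nat (j - S i))%Z by lia.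
    rewrite H, H'. ring.
Qed.

Theorem mainTheorem4 (x y : Z -> R) :
  uniformly_discrete x ->
  uniformly_discrete y ->
  (forall t : R, 0 <= t -> ((exists n : Z, x n = t) <-> (exists n : Z, y n = t))) ->
  (forall n : Z, 0 <= x n -> in_equilibrium x n) ->
  (forall n : Z, 0 <= y n -> in_equilibrium y n) ->
  forall t : R, t < 0 -> ((exists n : Z, x n = t) <-> (exists n : Z, y n = t)).
Proof.
  intros Hux Huy HW Eqx Eqy.
  destruct (uniformly_discrete_crossing x Hux) as [n0 [Hx1 Hx0]].
  destruct (uniformly_discrete_crossing y Huy) as [m0 [Hy1 Hy0]].
  destruct Hux as [Hx [cx [Cx [Hcx [_ Hgx]]]]].
  destruct Huy as [Hy [cy [Cy [Hcy [_ Hgy]]]]].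
  pose proof (right_parts_equal x y n0 m0 Hx Hy HW Hx1 Hx0 Hy1 Hy0) as Hright.
  assert (Hleft : forall i, left_part x n0 i = left_part y m0 i).
  { apply (poles_equal (right_part x n0) (right_part_incr x n0 Hx) Cx
             (right_part_step x n0 Cx (fun n => proj2 (Hgx n)))
             _ _ cx cy Hcx Hcy).
    - apply left_part_lt, Hx.
    - intros i. rewrite Hright. apply left_part_lt, Hy.
    - exact (left_part_step x n0 cx (fun n => proj1 (Hgx n))).
    - exact (left_part_step y m0 cy (fun n => proj1 (Hgy n))).
    - exact (left_sums_cancel x y n0 m0 Hx Hy Hx0 Hy0 Eqx Eqy Hright). }
  intros t Ht.
  rewrite (negative_values_left_part x n0 Hx Hx0 t Ht),
          (negative_values_left_part y m0 Hy Hy0 t Ht).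
  split; intros [i Hi]; exists i; [rewrite <- Hleft | rewrite Hleft]; exact Hi.
Qed.
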